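(* Let $k\ge 2$, let $\mu=1/18$, $\rho=0.25\mu^k2^{-\binom k2}$, let $d$ be the smallest positive integer such that for all $r=1,\ldots,k$, $$\frac{\mu-d^{1-2r}}{dr+1}>(1-2^{-r})^d\quad\text{and}\quad\frac{d^{2-2r}-d^{1-2r}}{d+1}>\frac{1}{2^d},$$ let $\delta=\min\{\rho/k^2,\,1/(2kd^{2k})\}$ and $\epsilon=\delta\rho/5$. Let $n$ be sufficiently large, let $T$ be a $k$-partite tournament with vertex classes $A_1,\ldots,A_k$ of size $n$ each which satisfies: for all $1\le s,\ell\le k$, all sequences $A'=(v_1,\ldots,v_q)$ of $q\le d$ distinct elements of $A_\ell$ and all $D\in\{+,-\}^q$, $|C_D(A')\cap A_s|\le n(1/2)^q+n^{2/3}$ (together with the other properties below), and let $\pi$ be any permutation of $V(T)$. Then for every $1\le r\le k$, at most $k-1$ vertices of $A_r$ are not friendly vertices. The other properties assumed of $T$ are: for all $1\le r<k$, all permutations $\pi'$, all perfect $r$-sets $P$, all $R\subseteq P$, $S\subseteq A_{r+1}$ with $|R|,|S|\ge\epsilon n$, $L_{\pi'}(P,T)$ has at least $|R||S|/2^{r+1}$ edges between $R$ and $S$; for all $1\le r<k$, all $\pi'$ and all $S_i\subseteq A_i$ with $|S_i|\ge n/18$, there are at least $0.5(1/18)^rn^r2^{-\binom r2}$ friendly $r$-cliques $\{v_1,\ldots,v_r\}$ of $L_{\pi'}(T)$ with $v_i\in S_i$; and for all $1\le r<k$, $r<t\le k$, all $\hat W=(W_1,\ldots,W_d)\in(\{+,-\}^r)^d$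 and all sequences $\hat p=(p_1,\ldots,p_d)$ of pairwise disjoint $r$-tuples with $i$-th entry in $A_i$, $|I_{\hat W}(\hat p,t)|\le n(1-1/2^r)^d+n^{2/3}$.
   Context: For a permutation (bijection) $\pi:V(T)\to\{1,\ldots,kn\}$, $L_\pi(T)$ is the spanning subgraph of $T$ consisting of all edges $(u,v)\in E(T)$ with $\pi(u)<\pi(v)$, viewed as undirected. A vertex $v\in A_r$ is a friendly vertex (with respect to $\pi$) if for every $i\ne r$, $v$ has at least $n/17$ neighbors in $A_i$ in $L_\pi(T)$. For $D\in\{+,-\}^q$ and $A'=(v_1,\ldots,v_q)$, $C_D(A')$ is the set of vertices $w$ such that for each $j$, $(v_j,w)\in E(T)$ if $D(j)=+$ and $(w,v_j)\in E(T)$ if $D(j)=-$. A perfect $r$-set is a set $P$ of $n$ pairwise disjoint $r$-tuples $(a_1,\ldots,a_r)$ with $a_i\in A_i$; $L_{\pi}(P,T)$ is the bipartite graph on $P\cup A_{r+1}$ where $p=(a_1,\ldots,a_r)\sim v$ iff $\{v,a_i\}\in E(L_{\pi}(T))$ for all $i$. An $r$-clique $\{v_1,\ldots,v_r\}$ of $L_\pi(T)$ with $v_i\in A_i$ is friendly if for every $r<t\le k$ and $1\le r'\le r$, $v_1,\ldots,v_{r'}$ have at least $n/2^{r'+1}$ common neighbors in $A_t$ in $L_\pi(T)$. $v\in A_t$ is $W$-inconsistent with $p=(a_1,\ldots,a_r)$ unless for every $i$, $(v,a_i)\in E(T)\iff W(i)=+$; $I_{\hat W}(\hat p,t)$ is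 the set of $v\in A_t$ that are $W_i$-inconsistent with $p_i$ for all $i$. *)

From Stdlib Require Import Reals.
From mathcomp Require Import all_boot.
Delimit Scope R_scope with Re.
Set Implicit Arguments. Unset Strict Implicit. Unset Printing Implicit Defensive.

Definition Rleb (x y : R) : bool := if Rle_dec x y then true else false.

(* Vertices of the k-partite tournament: (class index in 0..k-1, position in 0..n-1).
   The paper's class A_i (1-based) is class index i-1 here. *)
Definition vtx (k n : nat) := ('I_k * 'I_n)%type.

Section Defs.
Variables k n : nat.
Local Notation V := (vtx k n).

Definition Aset (i : nat) : {set V} := [set v : V | nat_of_ord v.1 == i].

(* T : rel V, T u v means the directed edge (u,v) is in E(T). *)
Definition kpartite_tournament (T : rel V) : Prop :=
  forall u v : V, (u.1 == v.1 -> ~~ T u v) /\ (u.1 != v.1 -> T u v = ~~ T v u).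

(* Edge {u,v} of L_pi(T), for pi : V -> 'I_(k*n) a bijection (labels shifted by 1). *)
Definition Ledge (T : rel V) (pi : V -> 'I_(k * n)) (u v : V) : bool :=
  (T u v && (pi u < pi v)) || (T v u && (pi v < pi u)).

Definition friendly (T : rel V) (pi : V -> 'I_(k * n)) (v : V) : bool :=
  [forall i : 'I_k, (i != v.1) ==>
     Rleb (INR n / 17) (INR #|[set w : V | (w.1 == i) && Ledge T pi v w]|)].

(* C_D(A'): A' = (v_1..v_q), D encoded as a seq bool (true = '+') *)
Definition CD (T : rel V) (A' : seq V) (D : seq bool) (w : V) : bool :=
  all (fun x => if x.2 then T x.1 w else T w x.1) (zip A' D).

Definition rtuple_in (r : nat) (p : r.-tuple V) : bool :=
  [forall i : 'I_r, nat_of_ord (tnth p i).1 == nat_of_ord i].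

Definition perfect_rset (r : nat) (P : {set r.-tuple V}) : Prop :=
  #|P| = n /\ (forall p, p \in P -> rtuple_in p) /\
  (forall p q, p \in P -> q \in P -> p != q -> [disjoint (val p) & (val q)]).

Definition Padj (T : rel V) (pi : V -> 'I_(k * n)) (r : nat) (p : r.-tuple V) (v : V) : bool :=
  [forall i : 'I_r, Ledge T pi (tnth p i) v].

Definition is_clique (T : rel V) (pi : V -> 'I_(k * n)) (r : nat) (c : r.-tuple V) : bool :=
  rtuple_in c &&
  [forall i : 'I_r, forall j : 'I_r, (i != j) ==> Ledge T pi (tnth c i) (tnth c j)].

(* friendly r-clique: for r < t <= k (1-based; 0-based index t >= r) and 1 <= r' <= r,
   v_1..v_{r'} have at least n/2^{r'+1} common neighbours in A_t *)
Definition friendly_clique (T : rel V) (pi : V -> 'I_(k * n)) (r : nat) (c : r.-tuple V) : bool :=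
  [forall t : 'I_k, (r <= t) ==> [forall r' : 'I_r.+1, (0 < r') ==>
     Rleb (INR n / 2 ^ (r' + 1))
       (INR #|[set w : V | (w.1 == t) &&
          [forall i : 'I_r, (i < r') ==> Ledge T pi (tnth c i) w]]|)]].

Definition inconsistent (T : rel V) (r : nat) (W : r.-tuple bool) (p : r.-tuple V) (v : V) : bool :=
  ~~ [forall i : 'I_r, T v (tnth p i) == tnth W i].

Definition Iset (T : rel V) (r d : nat) (W : d.-tuple (r.-tuple bool))
    (p : d.-tuple (r.-tuple V)) (t : nat) : {set V} :=
  [set v : V | (nat_of_ord v.1 == t) && [forall j : 'I_d, inconsistent T (tnth W j) (tnth p j) v]].

End Defs.

Definition mu : R := (1 / 18)%Re.
Definition rho (k : nat) : R := (/ 4 * mu ^ k * / 2 ^ 'C(k, 2))%Re.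
Definition dcond (k d : nat) : Prop :=
  forall r : nat, 1 <= r <= k ->
    ((mu - / INR d ^ (2 * r - 1)) / (INR d * INR r + 1) > (1 - / 2 ^ r) ^ d)%Re /\
    ((/ INR d ^ (2 * r - 2) - / INR d ^ (2 * r - 1)) / (INR d + 1) > / 2 ^ d)%Re.
Definition delta (k d : nat) : R :=
  Rmin (rho k / INR k ^ 2) (/ (2 * INR k * INR d ^ (2 * k)))%Re.
Definition eps (k d : nat) : R := (delta k d * rho k / 5)%Re.

Definition prop_codeg (k n d : nat) (T : rel (vtx k n)) : Prop :=
  forall (s l : 'I_k) (A' : seq (vtx k n)) (D : seq bool),
    uniq A' -> size A' <= d -> all (fun v => v.1 == l) A' -> size D = size A' ->
    (INR #|[set w : vtx k n | (w.1 == s) && CD T A' D w]|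
       <= INR n * (1 / 2) ^ size A' + Rpower (INR n) (2 / 3))%Re.

Definition prop_dense (k n d : nat) (T : rel (vtx k n)) : Prop :=
  forall r : nat, 1 <= r < k ->
  forall pi' : vtx k n -> 'I_(k * n), bijective pi' ->
  forall (P : {set r.-tuple (vtx k n)}), perfect_rset P ->
  forall (Rs : {set r.-tuple (vtx k n)}) (S : {set vtx k n}),
    Rs \subset P -> S \subset Aset k n r ->
    (eps k d * INR n <= INR #|Rs|)%Re -> (eps k d * INR n <= INR #|S|)%Re ->
    (INR #|Rs| * INR #|S| / 2 ^ (r + 1) <=
       INR #|[set x : r.-tuple (vtx k n) * vtx k n |
                (x.1 \in Rs) && (x.2 \in S) && Padj T pi' x.1 x.2]|)%Re.

Definition prop_cliques (k n : nat) (T : rel (vtx k n)) : Prop :=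
  forall r : nat, 1 <= r < k ->
  forall pi' : vtx k n -> 'I_(k * n), bijective pi' ->
  forall S : 'I_r -> {set vtx k n},
    (forall i : 'I_r, S i \subset Aset k n i /\ (INR n / 18 <= INR #|S i|)%Re) ->
    (/ 2 * (1 / 18) ^ r * INR n ^ r * / 2 ^ 'C(r, 2) <=
       INR #|[set c : r.-tuple (vtx k n) | is_clique T pi' c &&
                [forall i : 'I_r, tnth c i \in S i] && friendly_clique T pi' c]|)%Re.

Definition prop_incons (k n d : nat) (T : rel (vtx k n)) : Prop :=
  forall r : nat, 1 <= r < k ->
  forall t : 'I_k, r <= t ->
  forall (W : d.-tuple (r.-tuple bool)) (p : d.-tuple (r.-tuple (vtx k n))),
    (forall j : 'I_d, rtuple_in (tnth p j)) ->
    (forall j j' : 'I_d, j != j' -> [disjoint (val (tnth p j)) & (val (tnth p j'))]) ->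
    (INR #|Iset T W p t| <= INR n * (1 - / 2 ^ r) ^ d + Rpower (INR n) (2 / 3))%Re.

(* Suppose two vertices v, v' of A_r both have fewer than n/17 neighbours in
   L_pi(T) inside the same class A_i, with pi v < pi v'.  Every other vertex of
   A_i is then an L-neighbour of v or v', or lies in one of three sets
   C_D((v, v')) with |D| = 2, each of size at most n/4 + n^(2/3) by the
   codegree property (d >= 2 follows from dcond).  So
   n < 2n/17 + 3(n/4 + n^(2/3)), impossible for large n.  Hence choosing, for
   each non-friendly vertex of A_r, a class in which it has few neighbours is
   injective into the k - 1 classes other than A_r. *)

From Stdlib Require Import Reals Lra.
From mathcomp Require Import all_boot.

Set Implicit Arguments.
Unset Strict Implicit.
Unset Printing Implicit Defensive.

Lemma Rpower_two_thirds_lt (x : R) :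
  ((68 / 3) ^ 3 < x)%Re -> (68 * Rpower x (2 / 3) < 3 * x)%Re.
Proof.
move=> x_big; have x_pos : (0 < x)%Re by simpl in x_big; lra.
set y := Rpower x (2 / 3).
have y_pos : (0 < y)%Re by apply: exp_pos.
have y_cube : (y ^ 3 = x ^ 2)%Re.
  by rewrite -Rpower_pow // /y Rpower_mult -Rpower_pow //; f_equal; simpl; field.
apply: Rnot_le_lt => y_big.
have : ((3 * x) ^ 3 <= (68 * y) ^ 3)%Re by apply: pow_incr; lra.
rewrite !Rpow_mult_distr y_cube => h.
have : (x ^ 2 * (27 * x) <= x ^ 2 * 68 ^ 3)%Re by simpl in h |- *; lra.
move/(Rmult_le_reg_l _ _ _ (pow_lt _ 2 x_pos)); simpl in x_big |- *; lra.
Qed.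

Lemma card_le_of_private_witness (aT : finType) (k : nat) (r : 'I_k)
    (B : {set aT}) (P : aT -> 'I_k -> bool) :
  (forall v, v \in B -> exists2 i : 'I_k, i != r & P v i) ->
  (forall v v' (i : 'I_k),
     v \in B -> v' \in B -> i != r -> P v i -> P v' i -> v = v') ->
  #|B| <= k - 1.
Proof.
move=> witness private.
pose f v := odflt r [pick i | (i != r) && P v i].
have f_spec v : v \in B -> (f v != r) && P v (f v).
  move=> vB; rewrite /f; case: pickP => [i //|none] /=.
  by have [i ir Pvi] := witness v vB; have := none i; rewrite ir Pvi.
have f_inj : {in B &, injective f}.
  move=> v v' vB v'B fE; have /andP[fr Pv] := f_spec v vB.
  by have /andP[_ Pv'] := f_spec v' v'B; apply: private vB v'B fr Pv _; rewrite fE.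
have : f @: B \subset [set~ r].
  by apply/subsetP => _ /imsetP[v vB ->]; rewrite !inE; case/andP: (f_spec v vB).
by move/subset_leq_card; rewrite (card_in_imset f_inj) cardsC1 card_ord subn1.
Qed.

Lemma dcond_gt1 (k d : nat) : 0 < k -> 0 < d -> dcond k d -> 1 < d.
Proof.
case: d => [|[|d]] // k_pos _ /(_ 1%N); rewrite k_pos => /(_ isT) [+ _].
rewrite /mu /=; lra.
Qed.

Section SparseClasses.
Variables (k n : nat) (T : rel (vtx k n)) (pi : vtx k n -> 'I_(k * n)).

Definition Lnbrs (v : vtx k n) (i : 'I_k) : {set vtx k n} :=
  [set w | (w.1 == i) && Ledge T pi v w].

Definition CDset (A' : seq (vtx k n)) (D : seq bool) (i : 'I_k) : {set vtx k n} :=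
  [set w | (w.1 == i) && CD T A' D w].

Definition sparse (v : vtx k n) (i : 'I_k) : bool :=
  ~~ Rleb (INR n / 17) (INR #|Lnbrs v i|).

Lemma sparseP (v : vtx k n) (i : 'I_k) :
  reflect (INR #|Lnbrs v i| < INR n / 17)%Re (sparse v i).
Proof. by rewrite /sparse /Rleb; case: Rle_dec => h; constructor; lra. Qed.

Lemma unfriendly_sparse (v : vtx k n) :
  ~~ friendly T pi v -> exists2 i, i != v.1 & sparse v i.
Proof.
by rewrite negb_forall => /existsP[i]; rewrite negb_imply => /andP[iv sp]; exists i.
Qed.

Lemma card_class (i : 'I_k) : #|[set w : vtx k n | w.1 == i]| = n.
Proof.
have -> : [set w : vtx k n | w.1 == i] = setX [set i] [set: 'I_n].
  by apply/setP => -[a b]; rewrite !inE andbT.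
by rewrite cardsX cards1 cardsT card_ord mul1n.
Qed.

Hypotheses (T_tour : kpartite_tournament T) (pi_inj : injective pi).

(* A vertex of A_i adjacent in L to neither v nor v' realises one of three
   edge patterns towards (v, v'); the fourth, v -> w -> v', is excluded because
   it would put pi w below pi v and hence below pi v'. *)
Lemma class_sub_nbrs_pair (i : 'I_k) (v v' : vtx k n) :
  v.1 = v'.1 -> i != v.1 -> pi v < pi v' ->
  [set w | w.1 == i] \subset
    Lnbrs v i :|: Lnbrs v' i :|: CDset [:: v; v'] [:: true; true] i
      :|: CDset [:: v; v'] [:: false; true] i :|: CDset [:: v; v'] [:: false; false] i.
Proof.
move=> vv' iv lt_vv'; apply/subsetP => w; rewrite !inE => /eqP wi.
have wv : w.1 != v.1 by rewrite wi.
have wv' : w.1 != v'.1 by rewrite wi -vv'.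
have Twv : T w v = ~~ T v w by case: (T_tour w v) => _ /(_ wv).
have Twv' : T w v' = ~~ T v' w by case: (T_tour w v') => _ /(_ wv').
rewrite wi eqxx /= /Ledge /CD /= Twv Twv'.
have : (pi v < pi w) || (pi w < pi v').
  by case: (ltnP (pi v) (pi w)) => //= h; apply: leq_ltn_trans h lt_vv'.
by case: (T v w); case: (T v' w); case/orP=> ->; rewrite ?orbT.
Qed.

Lemma card_class_le_pair (i : 'I_k) (v v' : vtx k n) :
  v.1 = v'.1 -> i != v.1 -> pi v < pi v' ->
  n <= #|Lnbrs v i| + #|Lnbrs v' i| + #|CDset [:: v; v'] [:: true; true] i|
       + #|CDset [:: v; v'] [:: false; true] i| + #|CDset [:: v; v'] [:: false; false] i|.
Proof.
move=> vv' iv lt_vv'; have := subset_leq_card (class_sub_nbrs_pair vv' iv lt_vv').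
rewrite card_class => /leq_trans; apply.
by do 4 (apply: leq_trans (leq_card_setU _ _) _; rewrite ?leq_add2r).
Qed.

Variable d : nat.
Hypotheses (d_gt1 : 1 < d) (codeg : prop_codeg d T).

Lemma card_CDset_pair (i : 'I_k) (v v' : vtx k n) (D : seq bool) :
  v.1 = v'.1 -> v != v' -> size D = 2 ->
  (INR #|CDset [:: v; v'] D i| <= INR n / 4 + Rpower (INR n) (2 / 3))%Re.
Proof.
move=> vv' v_neq sD; have -> : (INR n / 4 = INR n * (1 / 2) ^ 2)%Re by field.
apply: (codeg i (l := v.1)) => //=.
- by rewrite inE v_neq.
- by rewrite eqxx vv' eqxx.
Qed.

(* 20000 > (68/3)^3, beyond which n < 2n/17 + 3 (n/4 + n^(2/3)) is false. *)
Lemma sparse_pair_uniq (i : 'I_k) (v v' : vtx k n) :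
  20000 <= n -> v.1 = v'.1 -> i != v.1 -> sparse v i -> sparse v' i -> v = v'.
Proof.
move=> n_big.
wlog lt_vv' : v v' / pi v <= pi v'.
  move=> wlog_le vv' iv sv sv'; case: (leqP (pi v) (pi v')) => [le_vv' | /ltnW le_v'v].
    exact: wlog_le.
  by symmetry; apply: wlog_le; rewrite -?vv'.
move=> vv' iv /sparseP sv /sparseP sv'; case: (eqVneq v v') => // v_neq; exfalso.
have {}lt_vv' : pi v < pi v'.
  by rewrite ltn_neqAle lt_vv' andbT; apply: contra v_neq => /eqP/val_inj/pi_inj->.
have := le_INR _ _ (elimT leP (card_class_le_pair vv' iv lt_vv')); rewrite !plus_INR.
have := card_CDset_pair i (D := [:: true; true]) vv' v_neq erefl.
have := card_CDset_pair i (D := [:: false; true]) vv' v_neq erefl.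
have := card_CDset_pair i (D := [:: false; false]) vv' v_neq erefl.
have n_big' : (20000 <= INR n)%Re.
  by have := le_INR _ _ (elimT leP n_big); rewrite (INR_IZR_INZ 20000).
have := @Rpower_two_thirds_lt (INR n) ltac:(simpl; lra).
lra.
Qed.
End SparseClasses.

Theorem lemma4p14 (k d : nat) :
  2 <= k -> 0 < d -> dcond k d -> (forall d' : nat, 0 < d' < d -> ~ dcond k d') ->
  exists N : nat, forall n : nat, N <= n ->
  forall T : rel (vtx k n), kpartite_tournament T ->
    prop_codeg d T -> prop_dense d T -> prop_cliques T -> prop_incons d T ->
  forall pi : vtx k n -> 'I_(k * n), bijective pi ->
  forall r : 'I_k, #|[set v : vtx k n | (v.1 == r) && ~~ friendly T pi v]| <= k - 1.
Proof.
move=> k_ge2 d_pos d_ok _.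
have d_gt1 := dcond_gt1 (ltnW k_ge2) d_pos d_ok.
exists 20000 => n n_big T T_tour codeg _ _ _ pi [pi_inv piK _] r.
apply: (card_le_of_private_witness (r := r) (P := sparse T pi)).
- move=> v; rewrite inE => /andP[/eqP <-]; exact: unfriendly_sparse.
- move=> v v' i; rewrite !inE => /andP[/eqP vr _] /andP[/eqP v'r _] ir.
  have vv' : v.1 = v'.1 by rewrite vr v'r.
  have iv : i != v.1 by rewrite vr.
  exact: (sparse_pair_uniq T_tour (can_inj piK) d_gt1 codeg n_big vv' iv).
Qed.
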